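(* Let $m>k>0$ and $n\ge1$ be integers with $\gcd(m,k)=1$. Then $$\frac{m^2n}{mnk+1}=[a_1,\dots,a_h]^-,$$ where the string $(a_1,\dots,a_h)$ is obtained from $(2,n+1,2)$ by a finite (possibly empty) sequence of operations, each of one of the following two types: (1) $(n_1,\dots,n_b)\mapsto(2,n_1,n_2,\dots,n_{b-1},n_b+1)$; (2) $(n_1,\dots,n_b)\mapsto(n_1+1,n_2,\dots,n_b,2)$.
   Context: For integers $b_i\ge2$, $$[b_1,\dots,b_k]^-=b_1-\cfrac{1}{b_2-\cfrac{1}{\ddots-\cfrac{1}{b_k}}}.$$ *)

From HB Require Import structures.
From mathcomp Require Import all_boot all_order all_algebra.
Set Implicit Arguments. Unset Strict Implicit. Unset Printing Implicit Defensive.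
Import Order.TTheory GRing.Theory Num.Theory.

(* Hirzebruch--Jung (negative) continued fraction
   [b_1,...,b_k]^- = b_1 - 1/(b_2 - 1/(... - 1/b_k)), computed in rat.
   The empty string is given the (irrelevant) value 0. *)
Fixpoint hjcf (s : seq nat) : rat :=
  match s with
  | [::] => 0%R
  | [:: b] => (b%:R)%R
  | b :: t => (b%:R - (hjcf t)^-1)%R
  end.

Definition op1 (s : seq nat) : seq nat :=
  match s with
  | [::] => [::]
  | x :: t => 2 :: rcons (belast x t) (last x t).+1
  end.

Definition op2 (s : seq nat) : seq nat :=
  match s with
  | [::] => [::]
  | x :: t => rcons (x.+1 :: t) 2
  end.

Inductive reachable (n : nat) : seq nat -> Prop :=
  | reach0 : reachable n [:: 2; n.+1; 2]
  | reach1 s : reachable n s -> reachable n (op1 s)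
  | reach2 s : reachable n s -> reachable n (op2 s).

From HB Require Import structures.
From mathcomp Require Import all_boot all_order all_algebra.
From mathcomp Require Import ring zify.
Import Order.TTheory GRing.Theory Num.Theory.

(* Attach to a string s = (a_1,...,a_h) the 2x2 matrix
   M(s) = S(a_1) ... S(a_h) with S(a) = [[a, -1], [1, 0]].  When every
   a_i >= 2, the first column (p, q) of M(s) satisfies 0 <= q < p and
   [a_1,...,a_h]^- = p / q.  Both operations act on M(s) by fixed
   matrices: op1 multiplies by S(2) on the left and by [[1,0],[-1,1]] on the
   right, op2 by [[1,1],[0,1]] on the left and by S(2) on the right.  Hence
   the family of matrices
     T(m, k) = [[m^2 n, -(mn(m-k)+1)], [mnk+1, -(k(m-k)n+1)]]
   is carried along: M(2,n+1,2) = T(2,1), op1 sends T(m,k) to T(2m-k,m) and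
   op2 sends T(m,k) to T(m+k,k).  A Euclid-type descent shows that every
   coprime pair m > k > 0 arises from (2,1) by the moves (m,k) -> (m+k,k)
   and (m,k) -> (2m-k,m); so M(s) = T(m,k) for some reachable s, and reading
   off its first column gives the theorem. *)

Lemma coprime_addr (a b : nat) : coprime (a + b) b = coprime a b.
Proof. by rewrite /coprime gcdnC gcdnDr gcdnC. Qed.

(* Induction principle: a property of pairs holding at (2,1) and stable
   under (m,k) -> (m+k,k) and (m,k) -> (2m-k,m) holds at every coprime pair
   m > k > 0.  Backwards, (j+k,k) comes from (j,k) when k < j and from
   (k,k-j) when j < k; j = k forces (m,k) = (2,1). *)
Lemma coprime_pair_ind (P : nat -> nat -> Prop) :
  P 2 1 ->
  (forall m k, P m k -> P (m + k) k) ->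
  (forall m k, (k <= m)%N -> P m k -> P (m + (m - k)) m) ->
  forall m k, (0 < k < m)%N -> coprime m k -> P m k.
Proof.
move=> base right left; elim/ltn_ind=> m IH k /andP [k0 km].
have [j mE j0] : exists2 j, m = (j + k)%N & (0 < j)%N by exists (m - k)%N; lia.
rewrite {km}mE in IH *.
rewrite coprime_addr => cop.
case: (ltngtP k j) => [kj | jk | kj].
- by apply: right; apply: IH; rewrite ?k0 //; lia.
- have -> : (j + k = k + (k - (k - j)))%N by lia.
  apply: left; first exact: leq_subr.
  apply: IH; [lia | lia |].
  (* coprime k (k - j) follows from coprime j k, as k = (k - j) + j *)
  have e : k = (k - j + j)%N by rewrite subnK // ltnW.
  by rewrite {1}e addnC coprime_addr coprime_sym -coprime_addr -e coprime_sym.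
- by move: cop; rewrite -kj /coprime gcdnn => /eqP ->.
Qed.

Local Open Scope ring_scope.

Record mx2 := Mx2 { e11 : rat; e12 : rat; e21 : rat; e22 : rat }.

Definition mx2_mul (A B : mx2) : mx2 :=
  Mx2 (e11 A * e11 B + e12 A * e21 B) (e11 A * e12 B + e12 A * e22 B)
      (e21 A * e11 B + e22 A * e21 B) (e21 A * e12 B + e22 A * e22 B).

Definition mx2_id : mx2 := Mx2 1 0 0 1.

Lemma mx2_mulA (A B C : mx2) :
  mx2_mul A (mx2_mul B C) = mx2_mul (mx2_mul A B) C.
Proof.
by case: A B C => ? ? ? ? [? ? ? ?] [? ? ? ?]; rewrite /mx2_mul /=; congr Mx2; ring.
Qed.

Lemma mx2_mul1m (A : mx2) : mx2_mul mx2_id A = A.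
Proof. by case: A => ? ? ? ?; rewrite /mx2_mul /=; congr Mx2; ring. Qed.

Definition step (a : nat) : mx2 := Mx2 a%:R (-1) 1 0.

Definition mat (s : seq nat) : mx2 :=
  foldr (fun a M => mx2_mul (step a) M) mx2_id s.

Lemma mat_cat (s t : seq nat) : mat (s ++ t) = mx2_mul (mat s) (mat t).
Proof. by elim: s => [|a s IH] /=; rewrite ?mx2_mul1m // IH mx2_mulA. Qed.

Lemma mat_rcons (s : seq nat) (a : nat) :
  mat (rcons s a) = mx2_mul (mat s) (step a).
Proof.
rewrite -cats1 mat_cat /=; congr mx2_mul.
by rewrite /step /mx2_mul /=; congr Mx2; ring.
Qed.

Lemma hjcf_cons (a : nat) (t : seq nat) : hjcf (a :: t) = a%:R - (hjcf t)^-1.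
Proof. by case: t => [|b t] //=; rewrite invr0 subr0. Qed.

(* For entries >= 2, the first column (p, q) of M(s) has 0 <= q, q + 1 <= p,
   and [s]^- = p / q; the inequality keeps p nonzero for the next step. *)
Lemma hjcf_mat (s : seq nat) : all (leq 2) s ->
  [/\ 0 <= e21 (mat s), e21 (mat s) + 1 <= e11 (mat s)
    & hjcf s = e11 (mat s) / e21 (mat s)].
Proof.
elim: s => [|a t IH]; first by move=> _ /=; rewrite invr0 mulr0 add0r.
move=> /andP [a2 /IH [q0 qp Et]]; rewrite hjcf_cons Et /= !mul1r mul0r addr0 mulN1r.
set p := e11 (mat t) in qp *; set q := e21 (mat t) in q0 qp *.
have p0 : 0 < p by apply: lt_le_trans qp; rewrite ltr_wpDl.
split; first exact: ltW.
- have a2' : 2 <= a%:R :> rat by rewrite (ler_nat _ 2).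
  rewrite -subr_ge0.
  have -> : a%:R * p - q - (p + 1) = (a%:R - 2) * p + (p - (q + 1)) by ring.
  by rewrite addr_ge0 ?mulr_ge0 ?subr_ge0 // ltW.
- by rewrite invf_div mulrBl mulfK ?gt_eqF.
Qed.

Lemma reachable_wf {n : nat} {s : seq nat} : (1 <= n)%N -> reachable n s ->
  all (leq 2) s /\ s <> [::].
Proof.
move=> n1; elim=> {s} [|s _ [A s0]|s _ [A s0]].
- by rewrite /= ltnS n1.
- case: s s0 A => [|x t] // _ A; split=> //=.
  move: A; rewrite (lastI x t) !all_rcons => /andP [xl ->].
  by rewrite (leq_trans xl).
- case: s s0 A => [|x t] // _ /= /andP [x2 A].
  by split=> //=; rewrite all_rcons /= (leq_trans x2) ?A.
Qed.

(* The two operations act by multiplication with fixed matrices: increasing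
   an entry by one is a right (resp. left) multiplication of S(a). *)

Definition lower : mx2 := Mx2 1 0 (-1) 1.
Definition upper : mx2 := Mx2 1 1 0 1.

Lemma step_succ_r (a : nat) : step a.+1 = mx2_mul (step a) lower.
Proof. by rewrite /step /mx2_mul /=; congr Mx2; ring. Qed.

Lemma step_succ_l (a : nat) : step a.+1 = mx2_mul upper (step a).
Proof. by rewrite /step /mx2_mul /=; congr Mx2; ring. Qed.

Lemma mat_op1 (s : seq nat) : s <> [::] ->
  mat (op1 s) = mx2_mul (mx2_mul (step 2) (mat s)) lower.
Proof.
case: s => [|x t] // _; rewrite [in RHS]lastI /= !mat_rcons (step_succ_r (last x t)).
by rewrite !mx2_mulA.
Qed.

Lemma mat_op2 (s : seq nat) : s <> [::] ->
  mat (op2 s) = mx2_mul (mx2_mul upper (mat s)) (step 2).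
Proof. by case: s => [|x t] // _; rewrite mat_rcons /= step_succ_l mx2_mulA. Qed.

Definition target (n m k : rat) : mx2 :=
  Mx2 (m * m * n) (- (m * n * (m - k) + 1))
      (m * n * k + 1) (- (k * (m - k) * n + 1)).

Lemma target_base (n : nat) : mat [:: 2%N; n.+1; 2%N] = target n%:R 2 1.
Proof. by rewrite /target /mat /= /mx2_mul /=; congr Mx2; ring. Qed.

Lemma target_op1 (n m k : rat) :
  mx2_mul (mx2_mul (step 2) (target n m k)) lower = target n (2 * m - k) m.
Proof. by rewrite /target /mx2_mul /=; congr Mx2; ring. Qed.

Lemma target_op2 (n m k : rat) :
  mx2_mul (mx2_mul upper (target n m k)) (step 2) = target n (m + k) k.
Proof. by rewrite /target /mx2_mul /=; congr Mx2; ring. Qed.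

Lemma reachable_target {n m k : nat} : (1 <= n)%N ->
  (0 < k < m)%N -> coprime m k ->
  exists2 s, reachable n s & mat s = target n%:R m%:R k%:R.
Proof.
move=> n1; move: m k; apply: coprime_pair_ind => [|m k|m k km].
- by exists [:: 2%N; n.+1; 2%N]; [exact: reach0 | exact: target_base].
- case=> s R E; exists (op2 s); first exact: reach2.
  by rewrite mat_op2 ?E ?target_op2 ?natrD //; case: (reachable_wf n1 R).
- case=> s R E; exists (op1 s); first exact: reach1.
  rewrite mat_op1 ?E ?target_op1; last by case: (reachable_wf n1 R).
  by congr target; rewrite natrD natrB //; ring.
Qed.

Theorem lemma3p3 (m k n : nat) :
  (0 < k)%N -> (k < m)%N -> (1 <= n)%N -> coprime m k ->
  exists s : seq nat, reachable n s /\
    hjcf s = ((m ^ 2 * n)%:R / (m * n * k + 1)%:R)%R.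
Proof.
move=> k0 km n1 cop.
have kmk : (0 < k < m)%N by rewrite k0.
have [s R E] := reachable_target n1 kmk cop.
exists s; split=> //.
have [_ _ ->] := hjcf_mat _ (proj1 (reachable_wf n1 R)).
by rewrite E /target /= natrD natrM natrX expr2 !natrM.
Qed.
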